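(* Let $w_1,w_i\ge0$ with $w_1+w_i>0$, and let $\hat\mu_1,b_1,b_i,\hat\mu_i\in\mathcal M$ satisfy $\hat\mu_i\le b_i<b_1\le\hat\mu_1$. Set $\lambda=\frac{w_1b_1+w_ib_i}{w_1+w_i}$. Then for every $y\in[\hat\mu_i,\hat\mu_1]$, $$w_1\,d(\hat\mu_1,y)+w_i\,d(\hat\mu_i,y)\ \ge\ w_1\,d(b_1,\lambda)+w_i\,d(b_i,\lambda).$$
   Context: Fix a one-parameter canonical exponential family $\{\nu_\theta\}_{\theta\in\Theta}$ ($\Theta$ an open interval): $\frac{d\nu_\theta}{d\rho}(x)=\exp(x\theta-b(\theta))$ for a reference measure $\rho$ on $\mathbb R$, with $b(\theta)=\log\int e^{x\theta}d\rho(x)$. The mean map $\theta\mapsto b'(\theta)$ is a bijection from $\Theta$ onto an open interval $\mathcal M$, so members of the family are indexed by their mean. For $\mu,\mu'\in\mathcal M$, $d(\mu,\mu')$ denotes the Kullback–Leibler divergence from the member with mean $\mu$ to the member with mean $\mu'$. *)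

From HB Require Import structures.
From mathcomp Require Import all_boot all_order all_algebra.
From mathcomp Require Import all_classical all_reals all_analysis.
Set Implicit Arguments. Unset Strict Implicit. Unset Printing Implicit Defensive.
Import Order.TTheory GRing.Theory Num.Theory.
Import numFieldNormedType.Exports.
Local Open Scope classical_set_scope.
Local Open Scope ring_scope.

(* Canonical one-parameter exponential family generated by a reference
   measure rho on (the Borel sets of) R:
     d nu_theta / d rho (x) = exp (x theta - b theta),
     b theta = log \int exp (x theta) d rho (x). *)

Definition logpart (R : realType) (rho : {measure set (measurableTypeR R) -> \bar R})
  (theta : R) : R :=
  ln (fine (\int[rho]_x (expR (x * theta))%:E)).

Definition efdens (R : realType) (rho : {measure set (measurableTypeR R) -> \bar R})
  (theta x : R) : R :=
  expR (x * theta - logpart rho theta).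

Definition efmean (R : realType) (rho : {measure set (measurableTypeR R) -> \bar R})
  (theta : R) : R :=
  derive1 (logpart rho) theta.

Definition efKL (R : realType) (rho : {measure set (measurableTypeR R) -> \bar R})
  (theta theta' : R) : \bar R :=
  \int[rho]_x (efdens rho theta x *
               ln (efdens rho theta x / efdens rho theta' x))%:E.

(* natural parameter of the member with mean mu (the mean map is a
   bijection Theta -> M, so this is the unique theta in Theta with b'(theta) = mu) *)
Definition efparam (R : realType) (rho : {measure set (measurableTypeR R) -> \bar R})
  (Theta : set R) (mu : R) : R :=
  xget 0 [set theta | Theta theta /\ efmean rho theta = mu].

Definition efd (R : realType) (rho : {measure set (measurableTypeR R) -> \bar R})
  (Theta : set R) (mu mu' : R) : \bar R :=
  efKL rho (efparam rho Theta mu) (efparam rho Theta mu').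

Definition canonical_expfam (R : realType)
  (rho : {measure set (measurableTypeR R) -> \bar R}) (Theta M : set R) : Prop :=
  open Theta /\ is_interval Theta /\ Theta !=set0 /\
  (forall theta, Theta theta ->
     rho.-integrable setT (fun x => (expR (x * theta))%:E)) /\
  (forall theta, Theta theta -> derivable (logpart rho) theta 1) /\
  (forall t t', Theta t -> Theta t' -> efmean rho t = efmean rho t' -> t = t') /\
  efmean rho @` Theta = M /\
  open M /\ is_interval M.

(* In mean coordinates the divergence is d(p, q) = B q - B p - p (theta q - theta p), with theta
   the natural parameter and B = b o theta: the KL integral equals
   (t - t') E_t[X] - b t + b t', and E_t[X] = b'(t) because the supporting-line inequality
   (t' - t) E_t[X] <= b t' - b t (from e^u >= 1 + u) makes t a minimum of b - E_t[X] id.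
   Nonnegativity of d alone forces theta to be nondecreasing, whence
   d(a, x) + d(x, z) <= d(a, z) for x between a and z. Finally
   w1 d(b1, z) + wi d(bi, z) is its value at lambda plus (w1 + wi) d(lambda, z), so it is
   minimal at z = lambda; evaluated at y clamped to [bi, b1] it is termwise below
   w1 d(muh1, y) + wi d(muhi, y). *)

From HB Require Import structures.
From mathcomp Require Import all_boot all_order all_algebra.
From mathcomp Require Import all_classical all_reals all_analysis.
From mathcomp Require Import measurable_realfun lra ring.
Set Implicit Arguments. Unset Strict Implicit. Unset Printing Implicit Defensive.
Import Order.TTheory GRing.Theory Num.Theory.
Import numFieldNormedType.Exports.
Local Open Scope classical_set_scope.
Local Open Scope ring_scope.

Section Bregman.
Variables (R : realFieldType) (M : set R) (t B : R -> R).

(* For t the natural parameter and B = b o t: the Bregman divergence of the convex conjugate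
   of b, with gradient t. *)
Definition bregman (p q : R) : R := B q - B p - p * (t q - t p).

Definition between (a x z : R) : bool := (a <= x <= z) || (z <= x <= a).

Lemma bregmm p : bregman p p = 0.
Proof. by rewrite /bregman; ring. Qed.

Lemma bregman_three_point a x z :
  bregman a z = bregman a x + bregman x z + (t x - t z) * (a - x).
Proof. by rewrite /bregman; ring. Qed.

Hypothesis bregman_ge0 : forall {p q}, M p -> M q -> 0 <= bregman p q.

Lemma bregman_nondecreasing p q : M p -> M q -> p <= q -> t p <= t q.
Proof.
move=> Mp Mq; rewrite le_eqVlt => /predU1P[-> //|pq].
have sym : bregman p q + bregman q p = (t q - t p) * (q - p).
  by rewrite /bregman; ring.
have := addr_ge0 (bregman_ge0 Mp Mq) (bregman_ge0 Mq Mp).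
by rewrite sym pmulr_lge0 ?subr_gt0 // subr_ge0.
Qed.

Lemma bregman_between a x z : M a -> M x -> M z -> between a x z ->
  bregman a x + bregman x z <= bregman a z.
Proof.
move=> Ma Mx Mz axz; rewrite [bregman a z](bregman_three_point a x z) lerDl.
by case/orP: axz => /andP[ax xz]; [apply: mulr_le0|apply: mulr_ge0];
  rewrite ?subr_le0 ?subr_ge0 //; exact: bregman_nondecreasing.
Qed.

Lemma bregman_le_nested p z p' z' : M p -> M z -> M p' -> M z' ->
  between p z z' -> between p' p z' -> bregman p z <= bregman p' z'.
Proof.
move=> Mp Mz Mp' Mz' pzz' pp'z'.
have h1 := bregman_between Mp Mz Mz' pzz'.
have h2 := bregman_between Mp' Mp Mz' pp'z'.
have := bregman_ge0 Mz Mz'; have := bregman_ge0 Mp' Mp; lra.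
Qed.

Variables (w1 wi b1 bi : R).
Hypotheses (hw1 : 0 <= w1) (hwi : 0 <= wi) (hw : 0 < w1 + wi).

Let lambda := (w1 * b1 + wi * bi) / (w1 + wi).

Lemma bregman_weighted_split z :
  w1 * bregman b1 z + wi * bregman bi z =
  w1 * bregman b1 lambda + wi * bregman bi lambda + (w1 + wi) * bregman lambda z.
Proof.
have hl : lambda * (w1 + wi) = w1 * b1 + wi * bi by rewrite mulfVK // gt_eqF.
apply/eqP; rewrite -subr_eq0; apply/eqP.
transitivity ((t lambda - t z) * (w1 * b1 + wi * bi - lambda * (w1 + wi))).
  by rewrite /bregman; ring.
by rewrite hl subrr mulr0.
Qed.

Lemma bregman_weighted_min z : M lambda -> M z ->
  w1 * bregman b1 lambda + wi * bregman bi lambda <=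
  w1 * bregman b1 z + wi * bregman bi z.
Proof.
move=> Ml Mz; rewrite (bregman_weighted_split z) lerDl.
by apply: mulr_ge0; [exact: ltW | exact: bregman_ge0].
Qed.

Lemma bregman_weighted_lower_bound m1 mi y :
  M m1 -> M b1 -> M bi -> M mi -> M y -> M lambda ->
  mi <= bi -> bi < b1 -> b1 <= m1 -> mi <= y <= m1 ->
  w1 * bregman b1 lambda + wi * bregman bi lambda <=
  w1 * bregman m1 y + wi * bregman mi y.
Proof.
move=> Mm1 Mb1 Mbi Mmi My Ml hi h hb1 /andP[yi y1].
(* the witness is y clamped to [bi, b1] *)
suff [z [Mz z1 zi]] : exists z, [/\ M z, bregman b1 z <= bregman m1 y
                                    & bregman bi z <= bregman mi y].
  apply: le_trans (bregman_weighted_min Ml Mz) _.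
  by apply: lerD; exact: ler_wpM2l.
have [ybi|biy] := ltP y bi.
  exists bi; split; rewrite ?bregmm ?bregman_ge0 //.
  apply: (bregman_le_nested Mb1 Mbi Mm1 My).
    by rewrite /between (ltW ybi) (ltW h) orbT.
  by rewrite /between hb1 (ltW (lt_trans ybi h)) orbT.
have [b1y|yb1] := ltP b1 y.
  exists b1; split; rewrite ?bregmm ?bregman_ge0 //.
  apply: (bregman_le_nested Mbi Mb1 Mmi My).
    by rewrite /between (ltW h) (ltW b1y).
  by rewrite /between hi (ltW (lt_trans h b1y)).
exists y; split => //.
  by apply: (bregman_le_nested Mb1 My Mm1 My); rewrite /between ?lexx ?yb1 ?hb1 ?orbT.
by apply: (bregman_le_nested Mbi My Mmi My); rewrite /between ?lexx ?biy ?hi.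
Qed.

End Bregman.

Lemma open_itvoo_ex (R : realType) (A : set R) x : open A -> A x ->
  exists2 e : R, 0 < e & `]x - e, x + e[ `<=` A.
Proof.
move=> oA Ax; have [e /= e0 he] := open_itvoo_subset oA Ax.
exists (e / 2); first lra.
by apply: he; rewrite /= ?sub0r ?normrN ?gtr0_norm; lra.
Qed.

Lemma derive1_at_min_sub_linear (R : realType) (f : R -> R) (m t e : R) :
  0 < e -> (forall s, s \in `]t - e, t + e[ -> derivable f s 1) ->
  (forall s, s \in `]t - e, t + e[ -> f t - m * t <= f s - m * s) ->
  derive1 f t = m.
Proof.
move=> e0 df fmin.
pose l := m *: @id R.
have dl s : derivable l s 1 by apply: derivableZ; exact: derivable_id.
have te : t \in `]t - e, t + e[ by rewrite in_itv /=; apply/andP; split; lra.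
have dfl s : s \in `]t - e, t + e[ -> derivable (f - l) s 1.
  by move=> /df fs; exact: derivableB.
have le_te : t - e <= t + e by lra.
have min0 := derive1_at_min le_te dfl te fmin.
move: (@derive_val _ _ _ _ _ _ _ min0).
rewrite deriveB //; last exact: df.
rewrite deriveZ // derive_id derive1E => /eqP.
by rewrite subr_eq0 => /eqP ->; rewrite /GRing.scale /= mulr1.
Qed.

Section ExponentialIntegrals.
Variables (R : realType) (rho : {measure set (measurableTypeR R) -> \bar R}).
Local Notation mR := (measurableTypeR R).

Definition efpartition (t : R) : R := fine (\int[rho]_x (expR (x * t))%:E).

Definition efmoment (t : R) : R := fine (\int[rho]_x (x * efdens rho t x)%:E).

Lemma measurable_expRM (t : R) : measurable_fun [set: mR] (fun x : R => expR (x * t)).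
Proof. by apply: measurableT_comp; [exact: measurable_expR | exact: measurable_funM]. Qed.

Lemma abs_mul_expR_le (x t e : R) : 0 < e ->
  `|x * expR (x * t)| <= `|e^-1 * (expR (x * (t + e)) + expR (x * (t - e)))|.
Proof.
move=> e0; have ext := expR_gt0 (x * t).
have exe := expR_gt0 (x * e); have exNe := expR_gt0 (- (x * e)).
rewrite normrM (gtr0_norm ext) [X in _ <= X]ger0_norm; last first.
  by rewrite mulr_ge0 ?invr_ge0 ?ltW ?addr_gt0 ?expR_gt0.
rewrite (mulrDr x t e) (mulrBr x t e) expRD expRB -expRN.
rewrite -mulrDr mulrCA [X in X <= _]mulrC ler_pM2l //.
rewrite ler_pdivlMl //.
have ex : e * `|x| <= expR (e * `|x|).
  by apply: le_trans (expR_ge1Dx _); rewrite lerDr.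
have [x0|x0] := leP 0 x.
  by move: ex; rewrite ger0_norm // mulrC; lra.
have exN : e * - x = - (x * e) by rewrite mulrN mulrC.
by move: ex; rewrite ltr0_norm // exN; lra.
Qed.

Lemma integrable_x_expR (t e : R) : 0 < e ->
  rho.-integrable setT (fun x : mR => (expR (x * (t + e)))%:E) ->
  rho.-integrable setT (fun x : mR => (expR (x * (t - e)))%:E) ->
  rho.-integrable setT (fun x : mR => (x * expR (x * t))%:E).
Proof.
move=> e0 ip im.
have ipm : rho.-integrable setT (fun x : mR =>
    (e^-1)%:E * ((expR (x * (t + e)))%:E + (expR (x * (t - e)))%:E))%E.
  by apply: integrableZl => //; exact: integrableD.
apply: le_integrable ipm => //.
  by apply/measurable_EFinP; apply: measurable_funM => //; exact: measurable_expRM.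
by move=> x _; rewrite -EFinD -EFinM !abse_EFin lee_fin abs_mul_expR_le.
Qed.

Section Density.
Variable t : R.
Hypotheses (Z_gt0 : 0 < efpartition t)
  (int_exp : rho.-integrable setT (fun x : mR => (expR (x * t))%:E)).

Lemma efdensE x : efdens rho t x = expR (x * t) / efpartition t.
Proof. by rewrite /efdens /logpart expRB lnK // posrE. Qed.

Lemma integrable_efdens : rho.-integrable setT (fun x : mR => (efdens rho t x)%:E).
Proof.
apply: (eq_integrable _ (fun x : mR => (efpartition t)^-1%:E * (expR (x * t))%:E)%E) => //.
  by move=> x _; rewrite efdensE -EFinM mulrC.
exact: integrableZl.
Qed.

Lemma integral_efdens : (\int[rho]_x (efdens rho t x)%:E = 1)%E.
Proof.
under eq_integral do rewrite efdensE mulrC EFinM.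
rewrite integralZl // -(fineK (integrable_fin_num _ int_exp)) // -EFinM.
by rewrite -/(efpartition t) mulVf // gt_eqF.
Qed.

Hypothesis int_xexp : rho.-integrable setT (fun x : mR => (x * expR (x * t))%:E).

Lemma integrable_x_efdens :
  rho.-integrable setT (fun x : mR => (x * efdens rho t x)%:E).
Proof.
apply: (eq_integrable _ (fun x : mR => (efpartition t)^-1%:E * (x * expR (x * t))%:E)%E) => //.
  by move=> x _; rewrite efdensE -EFinM mulrC mulrA.
exact: integrableZl.
Qed.

Lemma efKLE t' :
  efKL rho t t' = ((t - t') * efmoment t - logpart rho t + logpart rho t')%:E.
Proof.
have ip := integrable_efdens; have ixp := integrable_x_efdens.
rewrite /efKL; transitivity (\int[rho]_x ((t - t')%:E * (x * efdens rho t x)%:E +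
   (logpart rho t' - logpart rho t)%:E * (efdens rho t x)%:E))%E.
  apply: eq_integral => x _; rewrite -!EFinM -EFinD; congr EFin.
  rewrite /efdens -expRB expRK.
  by move: (logpart rho t) (logpart rho t') => A B; ring.
rewrite integralD //; [|exact: integrableZl|exact: integrableZl].
rewrite !integralZl // integral_efdens -(fineK (integrable_fin_num _ ixp)) //.
rewrite -!EFinM -EFinD; congr EFin; rewrite /efmoment.
by move: (fine _) (logpart rho t) (logpart rho t') => m A B; ring.
Qed.

End Density.

Lemma efmoment_subgradient t t' :
  0 < efpartition t -> rho.-integrable setT (fun x : mR => (expR (x * t))%:E) ->
  rho.-integrable setT (fun x : mR => (x * expR (x * t))%:E) ->
  0 < efpartition t' -> rho.-integrable setT (fun x : mR => (expR (x * t'))%:E) ->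
  (t' - t) * efmoment t <= logpart rho t' - logpart rho t.
Proof.
move=> Zt it ixt Zt' it'.
have ip := integrable_efdens Zt it; have ixp := integrable_x_efdens Zt ixt.
have ip' := integrable_efdens Zt' it'.
set c := logpart rho t' - logpart rho t.
have key : (\int[rho]_x ((1 - c)%:E * (efdens rho t x)%:E +
                          (t' - t)%:E * (x * efdens rho t x)%:E)
            <= \int[rho]_x (efdens rho t' x)%:E)%E.
  apply: le_integral => //.
    exact: integrableD (integrableZl measurableT _ ip) (integrableZl measurableT _ ixp).
  move=> x _; rewrite -!EFinM -EFinD lee_fin.
  have -> : efdens rho t' x = efdens rho t x * expR (x * (t' - t) - c).
    rewrite /efdens -expRD /c; congr expR.
    by move: (logpart rho t) (logpart rho t') => A B; ring.
  have -> : (1 - c) * efdens rho t x + (t' - t) * (x * efdens rho t x) =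
     efdens rho t x * (1 + (x * (t' - t) - c)) by ring.
  by rewrite ler_wpM2l ?expR_ge1Dx // ltW // expR_gt0.
rewrite (integral_efdens Zt' it') in key.
rewrite (integralD measurableT (integrableZl measurableT _ ip) (integrableZl measurableT _ ixp)) in key.
rewrite (integralZl measurableT ip) (integralZl measurableT ixp) in key.
rewrite (integral_efdens Zt it) -(fineK (integrable_fin_num measurableT ixp)) in key.
move: key; rewrite -!EFinM -EFinD lee_fin /efmoment.
move: (fine _) => m; clearbody c; clear; lra.
Qed.

End ExponentialIntegrals.

Lemma integral_expR_eq0 (R : realType) (rho : {measure set (measurableTypeR R) -> \bar R})
  (s t : R) :
  (\int[rho]_x (expR (x * s))%:E = 0)%E -> (\int[rho]_x (expR (x * t))%:E = 0)%E.
Proof.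
have mexp u : measurable_fun [set: measurableTypeR R] (fun x => (expR (x * u))%:E).
  by apply/measurable_EFinP; exact: measurable_expRM.
have absE u : (\int[rho]_x (expR (x * u))%:E = \int[rho]_x `|(expR (x * u))%:E|)%E.
  by apply: eq_integral => x _; rewrite gee0_abs // lee_fin ltW // expR_gt0.
rewrite absE => /(ae_eq_integral_abs rho measurableT (mexp s)).1 [N [mN rhoN sN]].
have rhoT : rho setT = 0%E.
  apply/eqP; rewrite eq_le measure_ge0 andbT -rhoN; apply: le_measure; rewrite ?inE //.
  by move=> x _; apply: sN => /= /(_ I) /eqP; rewrite eqe gt_eqF // expR_gt0.
by rewrite absE; exact: integral_abs_eq0.
Qed.

Section CanonicalFamily.
Variables (R : realType) (rho : {measure set (measurableTypeR R) -> \bar R}).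
Variables (Theta M : set R).
Hypothesis hfam : canonical_expfam rho Theta M.
Local Notation mR := (measurableTypeR R).

Lemma efpartition_gt0 t : Theta t -> 0 < efpartition rho t.
Proof.
case: hfam => oT [_ [_ [int_exp [_ [mean_inj _]]]]] Tt.
have Z_ge0 : (0 <= \int[rho]_x (expR (x * t))%:E)%E.
  by apply: integral_ge0 => x _; rewrite lee_fin ltW // expR_gt0.
(* a vanishing partition function makes rho null, hence the mean map constant *)
rewrite lt_neqAle fine_ge0 // andbT; apply/negP => /eqP Z0.
have I0 : (\int[rho]_x (expR (x * t))%:E = 0)%E.
  by rewrite -(fineK (integrable_fin_num measurableT (int_exp t Tt))) -/(efpartition rho t) -Z0.
have b0 : logpart rho = fun=> 0.
  by apply: funext => u; rewrite /logpart (integral_expR_eq0 u I0) /= ln0.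
have mean0 s : efmean rho s = 0 by rewrite /efmean b0 derive1_cst.
have [e e0 eT] := open_itvoo_ex oT Tt.
have Tte : Theta (t + e / 2) by apply: eT; rewrite /= in_itv /=; apply/andP; split; lra.
have := mean_inj _ _ Tt Tte; rewrite !mean0 => /(_ erefl); lra.
Qed.

Lemma efintegrable_x_expR t : Theta t ->
  rho.-integrable setT (fun x : mR => (x * expR (x * t))%:E).
Proof.
case: hfam => oT [_ [_ [int_exp _]]] Tt.
have [e e0 eT] := open_itvoo_ex oT Tt.
by apply: (integrable_x_expR (e := e / 2)); [lra | apply: int_exp; apply: eT;
  rewrite /= in_itv /=; apply/andP; split; lra ..].
Qed.

Lemma efmeanE t : Theta t -> efmean rho t = efmoment rho t.
Proof.
case: hfam => oT [_ [_ [int_exp [derivable_b _]]]] Tt.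
have [e e0 eT] := open_itvoo_ex oT Tt.
apply: (derive1_at_min_sub_linear e0) => s /eT Ts.
  exact: derivable_b.
have := efmoment_subgradient (efpartition_gt0 Tt) (int_exp t Tt)
  (efintegrable_x_expR Tt) (efpartition_gt0 Ts) (int_exp s Ts).
by move: (efmoment rho t) (logpart rho t) (logpart rho s) => m A B; lra.
Qed.

Lemma efparamP mu : M mu ->
  Theta (efparam rho Theta mu) /\ efmean rho (efparam rho Theta mu) = mu.
Proof.
case: hfam => _ [_ [_ [_ [_ [_ [<- _]]]]]] [t Tt <-].
by apply: (@xgetPex _ 0 [set s | Theta s /\ efmean rho s = efmean rho t]); exists t.
Qed.

Local Notation theta := (efparam rho Theta).
Local Notation b_theta := (logpart rho \o efparam rho Theta).

Lemma efdE p q : M p -> efd rho Theta p q = (bregman theta b_theta p q)%:E.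
Proof.
move=> /efparamP[Tp mean_p].
case: hfam => _ [_ [_ [int_exp _]]].
rewrite /efd (efKLE (efpartition_gt0 Tp) (int_exp _ Tp) (efintegrable_x_expR Tp)).
rewrite -(efmeanE Tp) mean_p /bregman /=; congr EFin.
by move: (theta p) (theta q) => a b; move: (logpart rho a) (logpart rho b) => A B; ring.
Qed.

Lemma efd_bregman_ge0 p q : M p -> M q -> 0 <= bregman theta b_theta p q.
Proof.
move=> /efparamP[Tp mean_p] /efparamP[Tq _].
case: hfam => _ [_ [_ [int_exp _]]].
have := efmoment_subgradient (efpartition_gt0 Tp) (int_exp _ Tp)
  (efintegrable_x_expR Tp) (efpartition_gt0 Tq) (int_exp _ Tq).
rewrite -(efmeanE Tp) mean_p /bregman /= mulrC.
by move: (theta p) (theta q) => a b; move: (logpart rho a) (logpart rho b) => A B; lra.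
Qed.

End CanonicalFamily.

Theorem mainTheorem6 (R : realType)
  (rho : {measure set (measurableTypeR R) -> \bar R}) (Theta M : set R)
  (hfam : canonical_expfam rho Theta M)
  (w1 wi muh1 b1 bi muhi : R)
  (hw1 : 0 <= w1) (hwi : 0 <= wi) (hw : 0 < w1 + wi)
  (hmu1 : M muh1) (hb1 : M b1) (hbi : M bi) (hmui : M muhi)
  (h1 : muhi <= bi) (h2 : bi < b1) (h3 : b1 <= muh1) :
  let lambda := (w1 * b1 + wi * bi) / (w1 + wi) in
  forall y : R, muhi <= y <= muh1 ->
  (w1%:E * efd rho Theta muh1 y + wi%:E * efd rho Theta muhi y >=
   w1%:E * efd rho Theta b1 lambda + wi%:E * efd rho Theta bi lambda)%E.
Proof.
move=> lambda y hy.
have M_itv : is_interval M by case: hfam => _ [_ [_ [_ [_ [_ [_ [_ ?]]]]]]].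
have My : M y by apply: (M_itv muhi muh1).
have Ml : M lambda.
  apply: (M_itv bi b1) => //; apply/andP; split.
    by rewrite ler_pdivlMr //; nra.
  by rewrite ler_pdivrMr //; nra.
rewrite !(efdE hfam) // -!EFinM -!EFinD lee_fin.
exact: (bregman_weighted_lower_bound (efd_bregman_ge0 hfam) hw1 hwi hw
  hmu1 hb1 hbi hmui My Ml h1 h2 h3 hy).
Qed.
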